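(* Let $G=K_{r_1,\dots,r_k}$ be a complete multipartite graph with $|V(G)|=r_1+\cdots+r_k$ even. Then $G$ has a good bisection.
   Context: A bisection of a graph $G$ is a bipartite spanning subgraph $H$ of $G$ with a bipartition into two partition sets (every edge of $H$ joining the two sets) whose sizes differ by at most one. A bisection $H$ of $G$ is good if $2d_H(v)\ge d_G(v)-1$ for every $v\in V(G)$. *)

From mathcomp Require Import all_boot.
Set Implicit Arguments. Unset Strict Implicit. Unset Printing Implicit Defensive.

Definition simple_graph (T : finType) (e : rel T) : Prop :=
  symmetric e /\ irreflexive e.

Definition deg (T : finType) (e : rel T) (v : T) : nat := #|[set w | e v w]|.

Definition spanning_subgraph (T : finType) (h e : rel T) : Prop :=
  simple_graph h /\ forall u v, h u v -> e u v.

Definition bipartite_with (T : finType) (h : rel T) (A : {set T}) : Prop :=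
  forall u v, h u v -> (u \in A) != (v \in A).

Definition bisection (T : finType) (e h : rel T) (A : {set T}) : Prop :=
  spanning_subgraph h e /\ bipartite_with h A /\
  (#|A| <= #|~: A|.+1 /\ #|~: A| <= #|A|.+1)%N.

Definition good_bisection (T : finType) (e h : rel T) (A : {set T}) : Prop :=
  bisection e h A /\ forall v, (deg e v <= (deg h v).*2.+1)%N.

(* The complete multipartite graph K_{r_1,...,r_k}: vertices are pairs (i, j)
   with i : 'I_k the part and j : 'I_(r i) the index in the part; two vertices
   are adjacent iff they lie in different parts. *)
Definition kmp_vertex (k : nat) (r : 'I_k -> nat) : finType :=
  {i : 'I_k & 'I_(r i)}.

Definition kmp_adj (k : nat) (r : 'I_k -> nat) : rel (kmp_vertex r) :=
  fun u v => tag u != tag v.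

From mathcomp Require Import all_boot zify.
Set Implicit Arguments. Unset Strict Implicit. Unset Printing Implicit Defensive.

(* Write n for the number of vertices and s_i = r_0 + ... + r_(i-1) for the
   prefix sums of the part sizes.  Put into A the first a_i = s_(i+1)/2 - s_i/2
   vertices of part i, and take for H all edges of G between A and its
   complement.  The a_i telescope to n/2, so (n being even) A and its complement
   both have n/2 vertices, and since 2 a_i is r_i - 1, r_i or r_i + 1, every
   vertex keeps at least half of its d_G(v) = n - r_i neighbours up to one. *)

Lemma card_set_sum1 (T : finType) (P : pred T) : #|[set x | P x]| = \sum_(x | P x) 1.
Proof. by rewrite -sum1_card; apply: eq_bigl => x; rewrite inE. Qed.

Lemma card_ord_lt n m : m <= n -> #|[set j : 'I_n | j < m]| = m.
Proof. by move=> le_mn; rewrite card_set_sum1 (big_ord_narrow le_mn) sum1_card card_ord. Qed.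

Section CutSubgraph.

Variables (T : finType) (e : rel T) (A : {set T}).

Definition cut_rel : rel T := fun u v => e u v && ((u \in A) != (v \in A)).

Lemma cut_rel_spanning : simple_graph e -> spanning_subgraph cut_rel e.
Proof.
case=> e_sym e_irr; split; last by move=> u v /andP[].
split=> [u v | u]; last by rewrite /cut_rel e_irr.
by rewrite /cut_rel e_sym eq_sym.
Qed.

Lemma cut_rel_bipartite : bipartite_with cut_rel A.
Proof. by move=> u v /andP[]. Qed.

Lemma bisection_cut_rel :
  simple_graph e -> #|A| = #|~: A| -> bisection e cut_rel A.
Proof.
move=> e_simple cardAC; split; first exact: cut_rel_spanning.
by split; [exact: cut_rel_bipartite | rewrite cardAC leqnSn].
Qed.

End CutSubgraph.

Section TaggedCount.

Variables (I : finType) (T_ : I -> finType).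

Lemma card_tagged_pred (P : pred {i : I & T_ i}) :
  #|[set u | P u]| = \sum_i #|[set x : T_ i | P (Tagged T_ x)]|.
Proof.
rewrite card_set_sum1 (eq_bigr _ (fun i _ => card_set_sum1 _)).
rewrite (sig_big_dep _ (fun i x => P (Tagged T_ x)) (fun _ _ => 1)) /=.
by apply: eq_bigl => -[].
Qed.

Lemma card_tagged_other (P : pred {i : I & T_ i}) i0 :
  #|[set u | (tag u != i0) && P u]| + #|[set x : T_ i0 | P (Tagged T_ x)]|
  = #|[set u | P u]|.
Proof.
rewrite !card_tagged_pred [RHS](bigD1 i0) //= (bigD1 i0) //= eqxx.
rewrite eq_card0 ?add0n => [|x]; last by rewrite inE.
rewrite addnC; congr (_ + _).
by apply: eq_bigr => i ne_i; apply: eq_card => x; rewrite !inE ne_i.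
Qed.

End TaggedCount.

Section CompleteMultipartite.

Variables (k : nat) (r : 'I_k -> nat).

Local Notation T := (kmp_vertex r).
Local Notation G := (@kmp_adj k r).
Local Notation n := (\sum_(i < k) r i).

Lemma kmp_simple : simple_graph G.
Proof. by split=> [u v | u]; rewrite /kmp_adj ?eqxx // eq_sym. Qed.

Lemma card_kmp : #|T| = n.
Proof.
rewrite -cardsT (card_tagged_pred predT); apply: eq_bigr => i _.
by rewrite cardsT card_ord.
Qed.

Lemma card_kmp_nbrs (v : T) (B : {set T}) :
  #|[set w | G v w && (w \in B)]| + #|[set x : 'I_(r (tag v)) | Tagged _ x \in B]|
  = #|B|.
Proof.
have -> : #|B| = #|[set w | w \in B]| by apply: eq_card => w; rewrite inE.
rewrite -(card_tagged_other (mem B) (tag v)); congr (_ + _).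
by apply: eq_card => w; rewrite !inE /kmp_adj eq_sym.
Qed.

Lemma deg_kmp v : deg G v + r (tag v) = n.
Proof.
rewrite -card_kmp -cardsT -(card_kmp_nbrs v setT).
congr (_ + _); first by apply: eq_card => w; rewrite !inE andbT.
by rewrite -[LHS]card_ord; apply: eq_card => x; rewrite !inE.
Qed.

Definition prefix_sum m := \sum_(i < k | i < m) r i.

Definition half_part (i : 'I_k) := prefix_sum i.+1 %/ 2 - prefix_sum i %/ 2.

Definition half_set : {set T} := [set v : T | tagged v < half_part (tag v)].

Lemma prefix_sumS (i : 'I_k) : prefix_sum i.+1 = prefix_sum i + r i.
Proof.
rewrite /prefix_sum (bigD1 i) //= addnC; congr (_ + _).
by apply: eq_bigl => j; rewrite ltnS -val_eqE; case: ltngtP.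
Qed.

Lemma prefix_sum_homo : {homo prefix_sum : m p / m <= p}.
Proof.
move=> m p le_mp; rewrite /prefix_sum big_mkcond [leqRHS]big_mkcond.
apply: leq_sum => i _; case: ifP => // lt_im.
by rewrite (leq_trans lt_im le_mp).
Qed.

Lemma half_part_bounds i :
  [/\ r i <= (half_part i).*2.+1, (half_part i).*2 <= (r i).+1 & half_part i <= r i].
Proof. by rewrite /half_part prefix_sumS; split; lia. Qed.

Lemma sum_half_part : \sum_i half_part i = n %/ 2.
Proof.
pose f m := prefix_sum m %/ 2.
rewrite -(big_mkord xpredT (fun m => f m.+1 - f m)) telescope_sumn; last first.
  by move=> m p /prefix_sum_homo; apply: leq_div2r.
rewrite /f /prefix_sum [X in _ - X %/ 2]big_pred0 // subn0; congr (_ %/ 2).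
by apply: eq_bigl => i; rewrite ltn_ord.
Qed.

Lemma card_part_half_set i :
  #|[set x : 'I_(r i) | Tagged _ x \in half_set]| = half_part i.
Proof.
have [_ _ le_ar] := half_part_bounds i.
by rewrite -(card_ord_lt le_ar); apply: eq_card => x; rewrite !inE.
Qed.

Lemma card_part_compl_half_set i :
  #|[set x : 'I_(r i) | Tagged _ x \in ~: half_set]| = r i - half_part i.
Proof.
have := cardsC [set x : 'I_(r i) | Tagged _ x \in half_set].
rewrite card_part_half_set card_ord => sum_r; rewrite -[in RHS]sum_r addKn.
by apply: eq_card => x; rewrite !inE.
Qed.

Lemma card_half_set : #|half_set| = n %/ 2.
Proof.
rewrite -sum_half_part /half_set card_tagged_pred; apply: eq_bigr => i _.
by rewrite -[RHS](card_part_half_set i); apply: eq_card => x; rewrite !inE.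
Qed.

Local Notation H := (cut_rel G half_set).

Lemma deg_cut_in v : v \in half_set ->
  deg H v + (r (tag v) - half_part (tag v)) = #|~: half_set|.
Proof.
move=> vA; rewrite /deg /cut_rel vA -(card_kmp_nbrs v (~: half_set)).
rewrite card_part_compl_half_set; congr (_ + _).
by apply: eq_card => w; rewrite !inE.
Qed.

Lemma deg_cut_out v : v \notin half_set ->
  deg H v + half_part (tag v) = #|half_set|.
Proof.
move=> /negPf vA; rewrite /deg /cut_rel vA -[half_part _]card_part_half_set.
rewrite -(card_kmp_nbrs v half_set).
by congr (_ + _); apply: eq_card => w; rewrite !inE; case: (_ < _).
Qed.

End CompleteMultipartite.

Theorem mainTheorem5 (k : nat) (r : 'I_k -> nat)
  (hr : forall i, (0 < r i)%N)
  (heven : ~~ odd (\sum_(i < k) r i)) :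
  exists (h : rel (kmp_vertex r)) (A : {set kmp_vertex r}),
    good_bisection (@kmp_adj k r) h A.
Proof.
exists (cut_rel (@kmp_adj k r) (half_set r)), (half_set r).
have n_even : (\sum_(i < k) r i) %% 2 = 0 by rewrite modn2 (negbTE heven).
have cardA := card_half_set r.
have cardAC : #|~: half_set r| = (\sum_(i < k) r i) %/ 2.
  by rewrite cardsCs setCK card_kmp cardA; lia.
split; first by apply: bisection_cut_rel (kmp_simple r) _; rewrite cardA cardAC.
move=> v; have := deg_kmp v; have [? ? ?] := half_part_bounds r (tag v).
by case: (boolP (v \in half_set r)) => [/deg_cut_in | /deg_cut_out]; lia.
Qed.
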